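(* In the finite multi-asset market model with proportional transaction costs described in the context, the deferred solvency cones satisfy \[ \mathcal{Q}_T=\mathcal{K}_T,\qquad \mathcal{Q}_t=\mathcal{Q}_{t+1}\cap\mathcal{L}_t+\mathcal{K}_t\quad\text{for all }t=0,\ldots,T-1, \] where $\mathcal{Q}_{t+1}\cap\mathcal{L}_t$ is the set of $\mathcal{F}_t$-measurable elements of $\mathcal{Q}_{t+1}$, and the sum is the algebraic sum of subsets of $\mathcal{L}_t$.
   Context: Let $(\Omega,\mathcal{F},\mathbb{P})$ be a finite probability space with filtration $(\mathcal{F}_t)_{t=0}^T$, where $\mathcal{F}_0=\{\emptyset,\Omega\}$, $\mathcal{F}_T=\mathcal{F}=2^\Omega$ and $\mathbb{P}(\{\omega\})>0$ for all $\omega\in\Omega$. For each $t$, $\mathcal{L}_t$ denotes the set of $\mathcal{F}_t$-measurable $\mathbb{R}^d$-valued random variables. There are $d$ assets; for all $t$ and $j,k=1,\ldots,d$, the exchange rate $\pi^{jk}_t>0$ is $\mathcal{F}_t$-measurable (one unit of asset $k$ can be obtained for $\pi^{jk}_t$ units of asset $j$), with $\pi^{jj}_t=1$. The solvency cone $\mathcal{K}_t\subseteq\mathcal{L}_t$ is the set of $x\in\mathcal{L}_t$ such that, for every $\omega$, $x(\omega)$ lies in the convex cone in $\mathbb{R}^d$ generated by the canonical basis vectors $e^1,\ldots,e^d$ and the vectors $\pi^{jk}_t(\omega)e^j-e^k$, $j,k=1,\ldots,d$. The deferred solvency cone $\mathcal{Q}_t\subseteq\mathcal{L}_t$ ($t=0,\ldots,T$)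 is the set of $z\in\mathcal{L}_t$ for which there exist $y_{t+1},\ldots,y_{T+1}$ with $y_s\in\mathcal{L}_{s-1}$ for $s=t+1,\ldots,T$, $y_{T+1}=0$, $z-y_{t+1}\in\mathcal{K}_t$ and $y_s-y_{s+1}\in\mathcal{K}_s$ for all $s=t+1,\ldots,T$. Standing assumption of the paper: the model admits no arbitrage opportunity, where an arbitrage opportunity is a predictable $\mathbb{R}^d$-valued $(y_t)_{t=0}^{T+1}$ ($y_0\in\mathbb{R}^d$, $y_t\in\mathcal{L}_{t-1}$ for $t\ge1$, $y_{T+1}=0$) with $y_t-y_{t+1}\in\mathcal{K}_t$ for $t=0,\ldots,T-1$, $y_0=0$, and such that $y_T-x\in\mathcal{K}_T$ for some $x\in\mathcal{L}_T\setminus\{0\}$ with all components non-negative. *)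

(* finite probability space = finType Omega, filtration = sequence of
   set algebras on Omega (on a finite set, sigma-algebras are exactly such algebras). *)
From mathcomp Require Import all_boot all_order all_algebra.
Set Implicit Arguments. Unset Strict Implicit. Unset Printing Implicit Defensive.
Import Order.TTheory GRing.Theory Num.Theory.
Local Open Scope ring_scope.

Section Market.
Variables (R : realFieldType) (Omega : finType) (d : nat).

Definition sigma_alg (A : {set {set Omega}}) : Prop :=
  [/\ set0 \in A,
      (forall B, B \in A -> ~: B \in A)
    & (forall B C, B \in A -> C \in A -> B :|: C \in A)].

Definition filtration (F : nat -> {set {set Omega}}) (T : nat) : Prop :=
  [/\ (forall t, (t <= T)%N -> sigma_alg (F t)),
      (forall t, (t < T)%N -> F t \subset F t.+1),
      F 0%N = [set set0; setT]
    & F T = setT].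

(* measurability on a finite space: every level set (hence every preimage) is in A *)
Definition meas_fun (A : {set {set Omega}}) (f : Omega -> R) : Prop :=
  forall r, [set w | f w == r] \in A.

Definition meas_rv (A : {set {set Omega}}) (x : Omega -> 'rV[R]_d) : Prop :=
  forall v, [set w | x w == v] \in A.

Definition L (F : nat -> {set {set Omega}}) (t : nat) (x : Omega -> 'rV[R]_d) : Prop :=
  meas_rv (F t) x.

Definition e (j : 'I_d) : 'rV[R]_d := delta_mx 0 j.

Definition in_solv_cone (p : 'I_d -> 'I_d -> R) (v : 'rV[R]_d) : Prop :=
  exists (a : 'I_d -> R) (b : 'I_d -> 'I_d -> R),
    [/\ (forall j, 0 <= a j), (forall j k, 0 <= b j k)
      & v = \sum_j a j *: e j + \sum_j \sum_k b j k *: (p j k *: e j - e k)].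

Definition K (F : nat -> {set {set Omega}}) (pi : nat -> 'I_d -> 'I_d -> Omega -> R)
  (t : nat) (x : Omega -> 'rV[R]_d) : Prop :=
  L F t x /\ forall w, in_solv_cone (fun j k => pi t j k w) (x w).

Definition rvsub (x y : Omega -> 'rV[R]_d) : Omega -> 'rV[R]_d := fun w => x w - y w.
Definition rvadd (x y : Omega -> 'rV[R]_d) : Omega -> 'rV[R]_d := fun w => x w + y w.
Definition rv0 : Omega -> 'rV[R]_d := fun _ => 0.

Definition Q (F : nat -> {set {set Omega}}) (pi : nat -> 'I_d -> 'I_d -> Omega -> R)
  (T t : nat) (z : Omega -> 'rV[R]_d) : Prop :=
  L F t z /\
  exists y : nat -> Omega -> 'rV[R]_d,
    [/\ (forall s, (t < s <= T)%N -> L F s.-1 (y s)),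
        y T.+1 = rv0,
        K F pi t (rvsub z (y t.+1))
      & (forall s, (t < s <= T)%N -> K F pi s (rvsub (y s) (y s.+1)))].

Definition arbitrage (F : nat -> {set {set Omega}}) (pi : nat -> 'I_d -> 'I_d -> Omega -> R)
  (T : nat) : Prop :=
  exists y : nat -> Omega -> 'rV[R]_d,
    [/\ (exists y0 : 'rV[R]_d, y 0%N = (fun _ => y0)),
        (forall s, (1 <= s <= T)%N -> L F s.-1 (y s)),
        y T.+1 = rv0 /\ y 0%N = rv0,
        (forall s, (s < T)%N -> K F pi s (rvsub (y s) (y s.+1)))
      & exists x : Omega -> 'rV[R]_d,
          [/\ L F T x, x <> rv0, (forall w j, 0 <= x w 0 j)
            & K F pi T (rvsub (y T) x)]].

End Market.

(* A deferred trade is a sequence of portfolios y_(t+1), ..., y_T, y_(T+1) = 0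
   whose successive rebalancings are solvent. Peeling off the first rebalancing
   z - y_(t+1) (solvent at time t) leaves a deferred trade from y_(t+1) starting
   at t+1, and y_(t+1) is F_t-measurable since it is predictable; conversely an
   F_t-measurable u in Q_(t+1) together with a solvent v gives the deferred trade
   from u + v that first rebalances by v. At t = T the only deferred trade is
   y_(T+1) = 0, so Q_T = K_T. *)
From mathcomp Require Import all_boot all_order all_algebra.
From Stdlib Require Import FunctionalExtensionality.
Import Order.TTheory GRing.Theory Num.Theory.
Local Open Scope ring_scope.

Section DeferredSolvency.
Variables (R : realFieldType) (Omega : finType) (d : nat).
Implicit Types (A : {set {set Omega}}) (u v z : Omega -> 'rV[R]_d).

Lemma sigma_algI A B C : sigma_alg A -> B \in A -> C \in A -> B :&: C \in A.
Proof.
move=> [_ Acompl Aunion] AB AC; rewrite -(setCK (B :&: C)) setCI.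
by apply: (Acompl); apply: (Aunion); apply: (Acompl).
Qed.

Lemma meas_rvD A u v :
  sigma_alg A -> meas_rv A u -> meas_rv A v -> meas_rv A (rvadd u v).
Proof.
move=> sigA Au Av r.
have -> : [set w | rvadd u v w == r] =
    \bigcup_(w0 : Omega) ([set w | u w == u w0] :&: [set w | v w == r - u w0]).
  apply/setP => w; rewrite inE; apply/eqP/bigcupP.
    move=> <-; exists w => //.
    by rewrite !inE eqxx /= /rvadd addrAC subrr add0r.
  by move=> [w0 _]; rewrite !inE /rvadd => /andP[/eqP -> /eqP ->]; rewrite addrC subrK.
case: (sigA) => A0 _ Aunion.
by apply: (big_ind (fun B => B \in A)) => // w0 _; apply: sigma_algI.
Qed.

Lemma rvsub0 z : rvsub z (@rv0 R Omega d) = z.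
Proof. by apply: functional_extensionality => w; rewrite /rvsub /rv0 subr0. Qed.

Lemma rvaddKl u v : rvsub (rvadd u v) u = v.
Proof. by apply: functional_extensionality => w; rewrite /rvsub /rvadd addrC addKr. Qed.

Lemma rvaddBl u z : rvadd u (rvsub z u) = z.
Proof. by apply: functional_extensionality => w; rewrite /rvadd /rvsub addrC subrK. Qed.

Variables (F : nat -> {set {set Omega}}) (pi : nat -> 'I_d -> 'I_d -> Omega -> R).
Variable T : nat.

Lemma Q_horizon z : Q F pi T T z <-> K F pi T z.
Proof.
split=> [[_ [y [_ -> KT _]]]|KT]; first by rewrite rvsub0 in KT.
split; first by case: KT.
have no_s s : ~ (T < s <= T)%N by case/andP => Ts /(leq_trans Ts); rewrite ltnn.
by exists (fun _ => @rv0 R Omega d); split; rewrite ?rvsub0 // => s /no_s.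
Qed.

Lemma Q_decompose t z :
  (t < T)%N -> F t \subset F t.+1 -> Q F pi T t z ->
  exists u v, [/\ Q F pi T t.+1 u, L F t u, K F pi t v & z = rvadd u v].
Proof.
move=> tT Fmon [_ [y [Ly yT Kt Ks]]].
have tS : (t < t.+1 <= T)%N by rewrite ltnSn tT.
have Lu : L F t (y t.+1) by exact: Ly tS.
exists (y t.+1), (rvsub z (y t.+1)); split; rewrite ?rvaddBl //.
split; first by move=> v; apply: (subsetP Fmon); exact: Lu.
exists y; split; [|by []|exact: Ks|]=> s /andP[ts sT].
- by apply: Ly; rewrite sT andbT ltnW.
- by apply: Ks; rewrite sT andbT ltnW.
Qed.

Lemma Q_compose t u v :
  (t < T)%N -> sigma_alg (F t) ->
  Q F pi T t.+1 u -> L F t u -> K F pi t v -> Q F pi T t (rvadd u v).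
Proof.
move=> tT sigFt [_ [y [Ly yT Kt Ks]]] Lu [Lv Kv].
split; first exact: meas_rvD.
(* prepend the portfolio u, held from t to t+1, to the deferred trade from u *)
exists (fun s => if s == t.+1 then u else y s); split.
- move=> s /andP[ts sT]; case: eqP => [-> //|/eqP sNt].
  by apply: Ly; rewrite sT andbT ltn_neqAle eq_sym sNt ts.
- by rewrite eqSS eq_sym (ltn_eqF tT).
- by rewrite eqxx rvaddKl.
- move=> s /andP[ts sT]; rewrite eqSS (gtn_eqF ts); case: eqP => [-> //|/eqP sNt].
  by apply: Ks; rewrite sT andbT ltn_neqAle eq_sym sNt ts.
Qed.

End DeferredSolvency.

Theorem proposition4p2 (R : realFieldType) (Omega : finType) (T d : nat)
  (P : Omega -> R) (F : nat -> {set {set Omega}})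
  (pi : nat -> 'I_d -> 'I_d -> Omega -> R) :
  (forall w, 0 < P w) -> \sum_w P w = 1 ->
  filtration F T ->
  (forall t j k, (t <= T)%N -> meas_fun (F t) (pi t j k)) ->
  (forall t j k w, (t <= T)%N -> 0 < pi t j k w) ->
  (forall t j w, (t <= T)%N -> pi t j j w = 1) ->
  ~ arbitrage F pi T ->
  (forall z : Omega -> 'rV[R]_d, Q F pi T T z <-> K F pi T z) /\
  (forall t, (t < T)%N -> forall z : Omega -> 'rV[R]_d,
     Q F pi T t z <->
     exists u v, [/\ Q F pi T t.+1 u, L F t u, K F pi t v & z = rvadd u v]).
Proof.
move=> _ _ [sigF Fmon _ _] _ _ _ _.
split=> [|t tT z]; first exact: Q_horizon.
split; first exact: Q_decompose (Fmon t tT).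
move=> [u [v [Qu Lu Kv ->]]].
by apply: Q_compose => //; apply: sigF; exact: ltnW.
Qed.
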